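(* Let $C$ be a cofibrant object of a P-category $(\mathcal{C},P,\mathcal{F},\mathcal{W})$ and let $v:A\to B$ be a trivial fibration. Let $f_0,f_1:C\to A$ and let $h:C\to P(B)$ satisfy $(\delta^0_B,\delta^1_B)h=(vf_0,vf_1)$ (i.e. $h$ is a homotopy from $vf_0$ to $vf_1$). Then there exists $\widetilde h:C\to P(A)$ with $(\delta^0_A,\delta^1_A)\widetilde h=(f_0,f_1)$ and $P(v)\widetilde h=h$; that is, $h$ lifts to a homotopy $\widetilde h:f_0\simeq f_1$ with $P(v)\widetilde h=h$.
   Context: Let $\mathcal{C}$ have finite products and a final object $e$. A functorial path is a functor $P$ with natural transformations $\iota:1\to P$, $\delta^0,\delta^1:P\to1$, $\delta^0\iota=\delta^1\iota=1$; a homotopy $h:f\simeq g$ is $h:A\to P(B)$ with $\delta^0h=f$, $\delta^1h=g$. The path is equipped with a symmetry $\tau$ ($\tau\tau=1$, $\tau\iota=\iota$, $\delta^k\tau=\delta^{1-k}$), a coproduct $c:P\to P^2$ ($c_{P(A)}c_A=P(c_A)c_A$, $\delta^1_{P(A)}c_A=P(\delta^1_A)c_A=1$, $c_A\iota_A=\iota_{P(A)}\iota_A$, $\delta^0_{P(A)}c_A=P(\delta^0_A)c_A=\iota_A\delta^0_A$), an interchange $\mu$ (natural automorphism of $P^2$, $\delta^k_{P(A)}\mu_A=P(\delta^k_A)$, $P(\delta^k_A)\mu_A=\delta^k_{P(A)}$) and a folding map $\nabla:P^2\to P$ ($\delta^k\nabla=\delta^k\delta^k_P$, $\nabla\iota_P=1$).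 A P-category has classes $\mathcal{F}$ (fibrations), $\mathcal{W}$ (weak equivalences); trivial fibrations are morphisms in both; axioms: (P$_1$) both contain isomorphisms and are closed under composition, $\mathcal{W}$ 2-out-of-3, each $A\to e$ a fibration; (P$_2$) $\iota_A\in\mathcal{W}$, $(\delta^0_A,\delta^1_A)\in\mathcal{F}$, $\delta^0_A,\delta^1_A$ trivial fibrations; (P$_3$) for $u:A\to C$ and a fibration $v:B\to C$, $A\times_CB$ exists, $\pi_1$ is a fibration, trivial if $v$ is, and $\pi_2\in\mathcal{W}$ if $u\in\mathcal{W}$; (P$_4$) $P$ preserves fibrations, weak equivalences and fibre products; (P$_5$) for each fibration $v:A\to B$, $((\delta^0_A,\delta^1_A),P(v)):P(A)\to(A\times A)\times_{B\times B}P(B)$ is a fibration. An object $C$ is cofibrant if for every trivial fibration $w:X\to Y$ and every $f:C\to Y$ there is $g:C\to X$ with $wg=f$. *)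

Set Implicit Arguments.
Unset Strict Implicit.

Record Category := {
  Obj :> Type;
  Hom : Obj -> Obj -> Type;
  idm : forall A, Hom A A;
  comp : forall A B D, Hom B D -> Hom A B -> Hom A D;
  comp_id_l : forall A B (f : Hom A B), comp (idm B) f = f;
  comp_id_r : forall A B (f : Hom A B), comp f (idm A) = f;
  comp_assoc : forall A B D E (h : Hom D E) (g : Hom B D) (f : Hom A B),
      comp h (comp g f) = comp (comp h g) f
}.
Arguments Hom {c} _ _.
Arguments idm {c} A.
Arguments comp {c A B D} _ _.

Declare Scope cat_scope.
Notation "g ∘ f" := (comp g f) (at level 40, left associativity) : cat_scope.
Open Scope cat_scope.

Definition is_iso {C : Category} {A B : C} (f : Hom A B) : Prop :=
  exists g : Hom B A, g ∘ f = idm A /\ f ∘ g = idm B.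

Record FiniteProducts (C : Category) := {
  term : C;
  bang : forall A : C, Hom A term;
  bang_uniq : forall (A : C) (f : Hom A term), f = bang A;
  prod : C -> C -> C;
  pr1 : forall A B : C, Hom (prod A B) A;
  pr2 : forall A B : C, Hom (prod A B) B;
  pair : forall (X A B : C), Hom X A -> Hom X B -> Hom X (prod A B);
  pair_pr1 : forall X A B (f : Hom X A) (g : Hom X B), pr1 A B ∘ pair f g = f;
  pair_pr2 : forall X A B (f : Hom X A) (g : Hom X B), pr2 A B ∘ pair f g = g;
  pair_uniq : forall X A B (h : Hom X (prod A B)),
      pair (pr1 A B ∘ h) (pr2 A B ∘ h) = h
}.
Arguments term {C} _.
Arguments bang {C} _ A.
Arguments prod {C} _ _ _.
Arguments pr1 {C} _ A B.
Arguments pr2 {C} _ A B.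
Arguments pair {C} _ {X A B} _ _.

Definition prod_map {C : Category} (Pr : FiniteProducts C) {A B A' B' : C}
  (f : Hom A A') (g : Hom B B') : Hom (prod Pr A B) (prod Pr A' B') :=
  pair Pr (f ∘ pr1 Pr A B) (g ∘ pr2 Pr A B).

Definition is_pullback {C : Category} {A B D : C} (u : Hom A D) (v : Hom B D)
  (Q : C) (p1 : Hom Q A) (p2 : Hom Q B) : Prop :=
  u ∘ p1 = v ∘ p2 /\
  forall (X : C) (a : Hom X A) (b : Hom X B), u ∘ a = v ∘ b ->
    exists! k : Hom X Q, p1 ∘ k = a /\ p2 ∘ k = b.
Arguments is_pullback {C A B D} u v Q p1 p2.

Record Functor (C D : Category) := {
  fobj :> C -> D;
  fmap : forall A B : C, Hom A B -> Hom (fobj A) (fobj B);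
  fmap_id : forall A : C, fmap (idm A) = idm (fobj A);
  fmap_comp : forall (A B E : C) (g : Hom B E) (f : Hom A B),
      fmap (g ∘ f) = fmap g ∘ fmap f
}.
Arguments fmap {C D} _ {A B} _.

Record PathStructure (C : Category) := {
  P : Functor C C;
  iota : forall A : C, Hom A (P A);
  d0 : forall A : C, Hom (P A) A;
  d1 : forall A : C, Hom (P A) A;
  iota_nat : forall A B (f : Hom A B), iota B ∘ f = fmap P f ∘ iota A;
  d0_nat : forall A B (f : Hom A B), d0 B ∘ fmap P f = f ∘ d0 A;
  d1_nat : forall A B (f : Hom A B), d1 B ∘ fmap P f = f ∘ d1 A;
  d0_iota : forall A, d0 A ∘ iota A = idm A;
  d1_iota : forall A, d1 A ∘ iota A = idm A;
  tau : forall A : C, Hom (P A) (P A);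
  tau_nat : forall A B (f : Hom A B), tau B ∘ fmap P f = fmap P f ∘ tau A;
  tau_tau : forall A, tau A ∘ tau A = idm (P A);
  tau_iota : forall A, tau A ∘ iota A = iota A;
  d0_tau : forall A, d0 A ∘ tau A = d1 A;
  d1_tau : forall A, d1 A ∘ tau A = d0 A;
  cop : forall A : C, Hom (P A) (P (P A));
  cop_nat : forall A B (f : Hom A B),
      cop B ∘ fmap P f = fmap P (fmap P f) ∘ cop A;
  cop_coassoc : forall A, cop (P A) ∘ cop A = fmap P (cop A) ∘ cop A;
  cop_d1_l : forall A, d1 (P A) ∘ cop A = idm (P A);
  cop_d1_r : forall A, fmap P (d1 A) ∘ cop A = idm (P A);
  cop_iota : forall A, cop A ∘ iota A = iota (P A) ∘ iota A;
  cop_d0_l : forall A, d0 (P A) ∘ cop A = iota A ∘ d0 A;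
  cop_d0_r : forall A, fmap P (d0 A) ∘ cop A = iota A ∘ d0 A;
  mu : forall A : C, Hom (P (P A)) (P (P A));
  mu_inv : forall A : C, Hom (P (P A)) (P (P A));
  mu_nat : forall A B (f : Hom A B),
      mu B ∘ fmap P (fmap P f) = fmap P (fmap P f) ∘ mu A;
  mu_inv_l : forall A, mu_inv A ∘ mu A = idm (P (P A));
  mu_inv_r : forall A, mu A ∘ mu_inv A = idm (P (P A));
  mu_d0_l : forall A, d0 (P A) ∘ mu A = fmap P (d0 A);
  mu_d1_l : forall A, d1 (P A) ∘ mu A = fmap P (d1 A);
  mu_d0_r : forall A, fmap P (d0 A) ∘ mu A = d0 (P A);
  mu_d1_r : forall A, fmap P (d1 A) ∘ mu A = d1 (P A);
  nabla : forall A : C, Hom (P (P A)) (P A);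
  nabla_nat : forall A B (f : Hom A B),
      nabla B ∘ fmap P (fmap P f) = fmap P f ∘ nabla A;
  nabla_d0 : forall A, d0 A ∘ nabla A = d0 A ∘ d0 (P A);
  nabla_d1 : forall A, d1 A ∘ nabla A = d1 A ∘ d1 (P A);
  nabla_iota : forall A, nabla A ∘ iota (P A) = idm (P A)
}.
Arguments P {C} _.
Arguments iota {C} _ A.
Arguments d0 {C} _ A.
Arguments d1 {C} _ A.

Definition MorClass (C : Category) := forall A B : C, Hom A B -> Prop.

Record PCategoryAxioms (C : Category) (Pr : FiniteProducts C)
    (PS : PathStructure C) (Fib Weq : MorClass C) : Prop := {
  P1_fib_iso : forall A B (f : Hom A B), is_iso f -> Fib A B f;
  P1_weq_iso : forall A B (f : Hom A B), is_iso f -> Weq A B f;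
  P1_fib_comp : forall A B D (g : Hom B D) (f : Hom A B),
      Fib _ _ f -> Fib _ _ g -> Fib _ _ (g ∘ f);
  P1_weq_comp : forall A B D (g : Hom B D) (f : Hom A B),
      Weq _ _ f -> Weq _ _ g -> Weq _ _ (g ∘ f);
  P1_weq_2of3_l : forall A B D (g : Hom B D) (f : Hom A B),
      Weq _ _ (g ∘ f) -> Weq _ _ g -> Weq _ _ f;
  P1_weq_2of3_r : forall A B D (g : Hom B D) (f : Hom A B),
      Weq _ _ (g ∘ f) -> Weq _ _ f -> Weq _ _ g;
  P1_term_fib : forall A : C, Fib _ _ (bang Pr A);
  P2_iota : forall A : C, Weq _ _ (iota PS A);
  P2_d01 : forall A : C, Fib _ _ (pair Pr (d0 PS A) (d1 PS A));
  P2_d0 : forall A : C, Fib _ _ (d0 PS A) /\ Weq _ _ (d0 PS A);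
  P2_d1 : forall A : C, Fib _ _ (d1 PS A) /\ Weq _ _ (d1 PS A);
  P3_exists : forall (A B D : C) (u : Hom A D) (v : Hom B D), Fib _ _ v ->
      exists (Q : C) (p1 : Hom Q A) (p2 : Hom Q B), is_pullback u v Q p1 p2;
  P3_props : forall (A B D : C) (u : Hom A D) (v : Hom B D), Fib _ _ v ->
      forall (Q : C) (p1 : Hom Q A) (p2 : Hom Q B), is_pullback u v Q p1 p2 ->
      Fib _ _ p1 /\ (Weq _ _ v -> Weq _ _ p1) /\ (Weq _ _ u -> Weq _ _ p2);
  P4_fib : forall A B (f : Hom A B), Fib _ _ f -> Fib _ _ (fmap (P PS) f);
  P4_weq : forall A B (f : Hom A B), Weq _ _ f -> Weq _ _ (fmap (P PS) f);
  P4_pullback : forall (A B D : C) (u : Hom A D) (v : Hom B D), Fib _ _ v ->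
      forall (Q : C) (p1 : Hom Q A) (p2 : Hom Q B), is_pullback u v Q p1 p2 ->
      is_pullback (fmap (P PS) u) (fmap (P PS) v) (P PS Q)
                  (fmap (P PS) p1) (fmap (P PS) p2);
  P5 : forall (A B : C) (v : Hom A B), Fib _ _ v ->
      forall (Q : C) (q1 : Hom Q (prod Pr A A)) (q2 : Hom Q (P PS B)),
      is_pullback (prod_map Pr v v) (pair Pr (d0 PS B) (d1 PS B)) Q q1 q2 ->
      forall k : Hom (P PS A) Q,
      q1 ∘ k = pair Pr (d0 PS A) (d1 PS A) -> q2 ∘ k = fmap (P PS) v ->
      Fib _ _ k
}.

Definition cofibrant {C : Category} (Fib Weq : MorClass C) (X : C) : Prop :=
  forall (Y Z : C) (w : Hom Y Z), Fib _ _ w -> Weq _ _ w ->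
  forall f : Hom X Z, exists g : Hom X Y, w ∘ g = f.

(* The comparison map k : P(A) -> (A × A) ×_(B × B) P(B) induced by (δ⁰, δ¹) and
   P(v) is a fibration by (P5). It is also a weak equivalence: P(v) = q₂ ∘ k is one
   by (P4), and so is the projection q₂, being the base change of the weak
   equivalence v × v (itself a composite of two base changes of v). A pair
   (f₀, f₁) together with h defines a map X -> (A × A) ×_(B × B) P(B), and
   lifting it through the trivial fibration k, using that X is cofibrant, gives
   the required homotopy. *)

Section Products.
Context {C : Category} (Pr : FiniteProducts C).

Lemma prod_ext (Z A B : C) (f g : Hom Z (prod Pr A B)) :
  pr1 Pr A B ∘ f = pr1 Pr A B ∘ g -> pr2 Pr A B ∘ f = pr2 Pr A B ∘ g -> f = g.
Proof.
  intros H1 H2. rewrite <- (pair_uniq f), <- (pair_uniq g), H1, H2. reflexivity.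
Qed.

Lemma pair_comp (Z W A B : C) (f : Hom W A) (g : Hom W B) (k : Hom Z W) :
  pair Pr f g ∘ k = pair Pr (f ∘ k) (g ∘ k).
Proof.
  apply prod_ext; rewrite comp_assoc; [rewrite !pair_pr1 | rewrite !pair_pr2];
    reflexivity.
Qed.

Lemma prod_map_pair (Z A B A' B' : C) (v : Hom A A') (w : Hom B B')
    (f : Hom Z A) (g : Hom Z B) :
  prod_map Pr v w ∘ pair Pr f g = pair Pr (v ∘ f) (w ∘ g).
Proof.
  unfold prod_map. rewrite pair_comp, <- !comp_assoc, pair_pr1, pair_pr2.
  reflexivity.
Qed.

Lemma prod_map_comp (A B A' B' : C) (v : Hom A A') (w : Hom B B') :
  prod_map Pr v w = prod_map Pr v (idm B') ∘ prod_map Pr (idm A) w.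
Proof.
  unfold prod_map at 3. rewrite prod_map_pair, !comp_id_l. reflexivity.
Qed.

Lemma prod_map_pullback_pr1 {A B : C} (Y : C) (v : Hom A B) :
  is_pullback (pr1 Pr B Y) v (prod Pr A Y) (prod_map Pr v (idm Y)) (pr1 Pr A Y).
Proof.
  unfold prod_map. split; [apply pair_pr1 |].
  intros Z a b Hab. exists (pair Pr b (pr2 Pr B Y ∘ a)). split.
  - split; [| apply pair_pr1].
    rewrite pair_comp. apply prod_ext.
    + rewrite pair_pr1, <- comp_assoc, pair_pr1, Hab. reflexivity.
    + rewrite pair_pr2, <- comp_assoc, pair_pr2, comp_id_l. reflexivity.
  - intros k [H1 H2]. apply prod_ext.
    + rewrite pair_pr1. symmetry. exact H2.
    + rewrite pair_pr2, <- H1, comp_assoc, pair_pr2, <- comp_assoc, comp_id_l.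
      reflexivity.
Qed.

Lemma prod_map_pullback_pr2 {A B : C} (Y : C) (v : Hom A B) :
  is_pullback (pr2 Pr Y B) v (prod Pr Y A) (prod_map Pr (idm Y) v) (pr2 Pr Y A).
Proof.
  unfold prod_map. split; [apply pair_pr2 |].
  intros Z a b Hab. exists (pair Pr (pr1 Pr Y B ∘ a) b). split.
  - split; [| apply pair_pr2].
    rewrite pair_comp. apply prod_ext.
    + rewrite pair_pr1, <- comp_assoc, pair_pr1, comp_id_l. reflexivity.
    + rewrite pair_pr2, <- comp_assoc, pair_pr2, Hab. reflexivity.
  - intros k [H1 H2]. apply prod_ext.
    + rewrite pair_pr1, <- H1, comp_assoc, pair_pr1, <- comp_assoc, comp_id_l.
      reflexivity.
    + rewrite pair_pr2. symmetry. exact H2.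
Qed.

End Products.

Section PCategory.
Context {C : Category} {Pr : FiniteProducts C} {PS : PathStructure C}
  {Fib Weq : MorClass C}.
Hypothesis HP : PCategoryAxioms Pr PS Fib Weq.

Lemma weq_prod_map {A B A' B' : C} {v : Hom A A'} {w : Hom B B'} :
  Fib _ _ v -> Weq _ _ v -> Fib _ _ w -> Weq _ _ w -> Weq _ _ (prod_map Pr v w).
Proof.
  intros Fv Wv Fw Ww. rewrite prod_map_comp. apply (P1_weq_comp HP).
  - exact (proj1 (proj2 (P3_props HP Fw (prod_map_pullback_pr2 Pr A w))) Ww).
  - exact (proj1 (proj2 (P3_props HP Fv (prod_map_pullback_pr1 Pr B' v))) Wv).
Qed.

Lemma path_comparison_trivial_fib {A B : C} {v : Hom A B} :
  Fib _ _ v -> Weq _ _ v ->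
  forall {Q : C} {q1 : Hom Q (prod Pr A A)} {q2 : Hom Q (P PS B)},
  is_pullback (prod_map Pr v v) (pair Pr (d0 PS B) (d1 PS B)) Q q1 q2 ->
  forall {k : Hom (P PS A) Q},
  q1 ∘ k = pair Pr (d0 PS A) (d1 PS A) -> q2 ∘ k = fmap (P PS) v ->
  Fib _ _ k /\ Weq _ _ k.
Proof.
  intros Fv Wv Q q1 q2 Hpb k Hk1 Hk2. split.
  - exact (P5 HP Fv Hpb Hk1 Hk2).
  - assert (Wq2 : Weq _ _ q2).
    { apply (P3_props HP (P2_d01 HP B) Hpb). exact (weq_prod_map Fv Wv Fv Wv). }
    apply (P1_weq_2of3_l HP (g := q2)); [| exact Wq2].
    rewrite Hk2. exact (P4_weq HP Wv).
Qed.

End PCategory.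

Theorem lemma2p21 (C : Category) (Pr : FiniteProducts C) (PS : PathStructure C)
  (Fib Weq : MorClass C) (HP : PCategoryAxioms Pr PS Fib Weq)
  (X : C) (HX : cofibrant Fib Weq X)
  (A B : C) (v : Hom A B) (Fv : Fib _ _ v) (Wv : Weq _ _ v)
  (f0 f1 : Hom X A) (h : Hom X (P PS B))
  (Hh : pair Pr (d0 PS B) (d1 PS B) ∘ h = pair Pr (v ∘ f0) (v ∘ f1)) :
  exists ht : Hom X (P PS A),
    pair Pr (d0 PS A) (d1 PS A) ∘ ht = pair Pr f0 f1 /\
    fmap (P PS) v ∘ ht = h.
Proof.
  destruct (P3_exists HP (prod_map Pr v v) (P2_d01 HP B)) as (Q & q1 & q2 & Hpb).
  pose proof Hpb as [_ Huniv].
  assert (Hnat : prod_map Pr v v ∘ pair Pr (d0 PS A) (d1 PS A)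
                 = pair Pr (d0 PS B) (d1 PS B) ∘ fmap (P PS) v).
  { rewrite prod_map_pair, pair_comp, (d0_nat PS), (d1_nat PS). reflexivity. }
  destruct (Huniv _ _ _ Hnat) as (k & [Hk1 Hk2] & _).
  destruct (path_comparison_trivial_fib HP Fv Wv Hpb Hk1 Hk2) as [Fk Wk].
  assert (Hx : prod_map Pr v v ∘ pair Pr f0 f1 = pair Pr (d0 PS B) (d1 PS B) ∘ h).
  { rewrite Hh, prod_map_pair. reflexivity. }
  destruct (Huniv _ _ _ Hx) as (x & [Hx1 Hx2] & _).
  destruct (HX _ _ k Fk Wk x) as (ht & Hht).
  exists ht. split.
  - rewrite <- Hk1, <- comp_assoc, Hht. exact Hx1.
  - rewrite <- Hk2, <- comp_assoc, Hht. exact Hx2.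
Qed.
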